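(* Let $q:=\frac{y_0^2(1-\beta)^2}{\nu^2x_0^{2(1-\beta)}}$. (i) If $q>1$, or $q=1$ and $\frac23\le\beta<1$, then the sequence $(\mathbb{P}_\infty^{(n)})_{n\ge0}$ diverges. (ii) If $q<1$, or $q=1$ and $0\le\beta<\frac23$, then as $n\to\infty$, $$\mathbb{P}_\infty=\mathbb{P}_\infty^{(n)}+\mathcal{O}\!\left(n^{-1+\frac{\beta}{2-2\beta}}\exp\!\big(-n\log(1/q)\big)\right).$$
   Context: Parameters $x_0,y_0,\nu>0$, $\beta\in[0,1)$. $\Gamma(v,x):=\Gamma(v)^{-1}\int_0^xu^{v-1}e^{-u}\,\mathrm{d}u$. $\mathbb{P}_\infty:=\frac{y_0}{\nu\sqrt{2\pi}}\int_0^\infty\left[1-\Gamma\!\left(\frac{1}{2(1-\beta)},\frac{x_0^{2(1-\beta)}}{2r(1-\beta)^2}\right)\right]r^{-3/2}\exp\!\left(-\frac{y_0^2}{2\nu^2r}\right)\mathrm{d}r$ (the large-time mass at zero of the uncorrelated SABR model), and for $n\ge0$, $\mathbb{P}_\infty^{(n)}:=\int_0^\infty\left[1-\Gamma\!\left(\frac{1}{2(1-\beta)},\frac{x_0^{2(1-\beta)}}{2r(1-\beta)^2}\right)\right]\frac{y_0}{\nu r^{3/2}\sqrt{2\pi}}\sum_{k=0}^n\frac{1}{k!}\left(-\frac{y_0^2}{2\nu^2r}\right)^k\mathrm{d}r$, equivalently $\mathbb{P}_\infty^{(n)}=\sum_{k=0}^n(-1)^kb_k$ with $b_k:=\frac{2y_0(1-\beta)}{\Gamma(\frac{1}{2(1-\beta)})\nu\sqrt{\pi}x_0^{1-\beta}}q^k\frac{\Gamma(k+1+\frac{\beta}{2-2\beta})}{k!(1+2k)}$.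 *)

From Stdlib Require Import Reals Lra Arith ClassicalEpsilon.
From Stdlib Require Import Factorial.
Open Scope R_scope.

Definition is_int_0_inf (f : R -> R) (l : R) : Prop :=
  forall eps : R, 0 < eps ->
    exists delta M : R, 0 < delta /\
      forall s t : R, 0 < s < delta -> M < t ->
        exists pr : Riemann_integrable f s t, Rabs (RiemannInt pr - l) < eps.

Definition is_int_0_to (f : R -> R) (x l : R) : Prop :=
  forall eps : R, 0 < eps ->
    exists delta : R, 0 < delta /\
      forall s : R, 0 < s < delta ->
        exists pr : Riemann_integrable f s x, Rabs (RiemannInt pr - l) < eps.

(** Values of these integrals (chosen by Hilbert's epsilon; meaningful when
    the integral converges, which is the case for all uses below). *)
Definition Int_0_inf (f : R -> R) : R :=
  epsilon (inhabits 0) (fun l => is_int_0_inf f l).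
Definition Int_0_to (f : R -> R) (x : R) : R :=
  epsilon (inhabits 0) (fun l => is_int_0_to f x l).

Definition Gamma_fun (v : R) : R :=
  Int_0_inf (fun u => Rpower u (v - 1) * exp (- u)).

Definition inc_Gamma (v x : R) : R :=
  / Gamma_fun v * Int_0_to (fun u => Rpower u (v - 1) * exp (- u)) x.

Definition tail_factor (x0 beta r : R) : R :=
  1 - inc_Gamma (/ (2 * (1 - beta)))
        (Rpower x0 (2 * (1 - beta)) / (2 * r * (1 - beta) ^ 2)).

(** Large-time mass at zero P_∞ of the uncorrelated SABR model. *)
Definition P_inf (x0 y0 nu beta : R) : R :=
  y0 / (nu * sqrt (2 * PI)) *
  Int_0_inf (fun r => tail_factor x0 beta r * Rpower r (- (3 / 2))
                      * exp (- (y0 ^ 2 / (2 * nu ^ 2 * r)))).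

Definition P_inf_n (x0 y0 nu beta : R) (n : nat) : R :=
  Int_0_inf (fun r => tail_factor x0 beta r
    * (y0 / (nu * Rpower r (3 / 2) * sqrt (2 * PI)))
    * sum_f_R0 (fun k => / INR (fact k) * (- (y0 ^ 2 / (2 * nu ^ 2 * r))) ^ k) n).

Definition q_param (x0 y0 nu beta : R) : R :=
  y0 ^ 2 * (1 - beta) ^ 2 / (nu ^ 2 * Rpower x0 (2 * (1 - beta))).

From Stdlib Require Import Reals Lra Lia Factorial Classical ClassicalEpsilon.
From Coquelicot Require Import Coquelicot.
Open Scope R_scope.

(* Write the tail factor as Q(v, X / r), with Q the regularized upper incomplete Gamma
   function, v = 1 / (2 (1 - beta)) and X = x0^(2 (1 - beta)) / (2 (1 - beta)^2).
   Integration by parts followed by the substitution u = X / r gives the moments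
     int_0^oo Q(v, X / r) r^(-k-3/2) dr = X^(-k-1/2) Gamma(v+k+1/2) / ((k+1/2) Gamma(v)),
   so P_inf^(n) is a partial sum of an alternating series whose k-th term is, up to a
   positive constant, t_k = q^k Gamma(k+1+a) / (k! (k+1/2)) with a = beta / (2 - 2 beta);
   Taylor's theorem for e^(-z/r) shows that P_inf differs from P_inf^(n) by at most the
   next term. Comparing Gamma(k+1+a) with k! from both sides gives t_k of order
   k^(a-1) q^k: the terms stay away from 0 when q > 1, or q = 1 and a >= 1 (that is
   beta >= 2/3), so the partial sums diverge, and otherwise they give the stated bound. *)

Section RealLimits.

Context {T : Type} {F : (T -> Prop) -> Prop} {FF : Filter F}.

Lemma filterlim_Rplus (f g : T -> R) (a b : R) :
  filterlim f F (locally a) -> filterlim g F (locally b) ->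
  filterlim (fun x => f x + g x) F (locally (a + b)).
Proof. intros Hf Hg. exact (filterlim_comp_2 f g Rplus Hf Hg (filterlim_plus a b)). Qed.

Lemma filterlim_Rmult_l (c : R) (f : T -> R) (a : R) :
  filterlim f F (locally a) -> filterlim (fun x => c * f x) F (locally (c * a)).
Proof. intro Hf. exact (filterlim_comp _ _ _ f (Rmult c) F (locally a) _ Hf (filterlim_scal_r c a)). Qed.

Lemma filterlim_Rminus (f g : T -> R) (a b : R) :
  filterlim f F (locally a) -> filterlim g F (locally b) ->
  filterlim (fun x => f x - g x) F (locally (a - b)).
Proof.
  intros Hf Hg. replace (a - b) with (a + (-1) * b) by ring.
  apply (filterlim_ext (fun x => f x + (-1) * g x)); [intro; ring|].
  apply filterlim_Rplus; [exact Hf|]. now apply filterlim_Rmult_l.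
Qed.

End RealLimits.

Lemma ball_R (l e y : R) : ball l e y <-> Rabs (y - l) < e.
Proof. reflexivity. Qed.

Lemma ball_R_between (l e y : R) : ball l e y -> l - e < y < l + e.
Proof. intro H. apply ball_R, Rabs_def2 in H. unfold minus, plus, opp in H; simpl in H. lra. Qed.

Lemma at_right_0_intro (P : R -> Prop) (d : R) :
  0 < d -> (forall s, 0 < s < d -> P s) -> at_right 0 P.
Proof.
  intros Hd HP. exists (mkposreal d Hd). intros s Hs Hpos. apply ball_R_between in Hs.
  simpl in Hs. apply HP. lra.
Qed.

Lemma Rdiv_lt_Rdiv_l (X s d : R) : 0 < X -> 0 < s < d -> X / d < X / s.
Proof. intros HX Hs. apply Rmult_lt_compat_l; [exact HX|]. apply Rinv_lt_contravar; nra. Qed.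

Lemma filterlim_at_right_continuous (F : R -> R) (x : R) :
  continuous F x -> filterlim F (at_right x) (locally (F x)).
Proof. apply filterlim_filter_le_1, filter_le_within. Qed.

Lemma filterlim_div_at_right_0 (X : R) :
  0 < X -> filterlim (fun r => X / r) (at_right 0) (Rbar_locally p_infty).
Proof.
  intros HX P [M HM]. pose proof (Rle_abs M). pose proof (Rabs_pos M).
  apply (at_right_0_intro _ (X / (Rabs M + 1))); [apply Rdiv_lt_0_compat; lra|].
  intros s Hs. apply HM.
  replace M with (M - Rabs M - 1 + X / (X / (Rabs M + 1))) by (field; lra).
  pose proof (Rdiv_lt_Rdiv_l X s (X / (Rabs M + 1)) HX Hs). lra.
Qed.

Lemma filterlim_div_pinfty (X : R) :
  0 < X -> filterlim (fun t => X / t) (Rbar_locally p_infty) (at_right 0).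
Proof.
  intros HX P [d HP]. pose proof (cond_pos d).
  exists (X / d). intros t Ht. assert (0 < X / d) by (apply Rdiv_lt_0_compat; lra).
  apply HP; [|apply Rdiv_lt_0_compat; lra].
  apply ball_R. rewrite Rminus_0_r, Rabs_right by (left; apply Rdiv_lt_0_compat; lra).
  pose proof (Rdiv_lt_Rdiv_l X (X / d) t HX ltac:(lra)).
  replace (X / (X / d)) with (pos d) in * by (field; lra). lra.
Qed.

Lemma filterlim_pinfty_monotone (G : R -> R) (M : R) :
  (forall t t', 1 <= t <= t' -> G t <= G t') -> (forall t, 1 <= t -> G t <= M) ->
  exists l, filterlim G (Rbar_locally p_infty) (locally l).
Proof.
  intros Hmono Hbound.
  set (E := fun y => exists t, 1 <= t /\ y = G t).
  destruct (completeness E) as [L [HLub HLleast]].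
  - exists M. intros y [t [Ht ->]]. auto.
  - exists (G 1), 1. split; [lra|auto].
  - exists L. apply (filterlim_locally G L). intros eps.
    assert (exists t0, 1 <= t0 /\ L - eps < G t0) as [t0 [Ht0 HGt0]].
    { apply NNPP. intro Hn. assert (L <= L - eps); [|pose proof (cond_pos eps); lra].
      apply HLleast. intros y [t [Ht ->]]. apply Rnot_lt_le. intro. apply Hn. exists t. auto. }
    exists t0. intros t Ht.
    assert (G t <= L) by (apply HLub; exists t; split; [lra|auto]).
    assert (G t0 <= G t) by (apply Hmono; lra).
    apply ball_R, Rabs_def1; pose proof (cond_pos eps); lra.
Qed.

Lemma filterlim_at_right_0_antitone (F : R -> R) (M : R) :
  (forall s s', 0 < s -> s <= s' <= 1 -> F s' <= F s) -> (forall s, 0 < s <= 1 -> F s <= M) ->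
  exists l, filterlim F (at_right 0) (locally l).
Proof.
  intros Hmono Hbound.
  destruct (filterlim_pinfty_monotone (fun t => F (/ t)) M) as [l Hl].
  - intros t t' Ht. apply Hmono; [apply Rinv_0_lt_compat; lra|].
    split; [apply Rinv_le_contravar; lra|]. rewrite <- Rinv_1. apply Rinv_le_contravar; lra.
  - intros t Ht. apply Hbound. split; [apply Rinv_0_lt_compat; lra|].
    rewrite <- Rinv_1. apply Rinv_le_contravar; lra.
  - exists l. apply (filterlim_ext_loc (fun s => F (/ / s))).
    + apply (at_right_0_intro _ 1); [lra|]. intros s Hs. now rewrite Rinv_inv.
    + exact (filterlim_comp _ _ _ Rinv (fun t => F (/ t)) _ _ _ filterlim_Rinv_0_right Hl).
Qed.

Lemma filterlim_at_right_0_Rabs (F : R -> R) (l : R) :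
  filterlim F (at_right 0) (locally l) ->
  forall eps, 0 < eps -> exists d, 0 < d /\ forall s, 0 < s < d -> Rabs (F s - l) < eps.
Proof.
  intros HF eps Heps. destruct (proj1 (filterlim_locally F l) HF (mkposreal eps Heps)) as [d Hd].
  exists d. split; [apply cond_pos|]. intros s [Hs0 Hs]. apply Hd; [|exact Hs0].
  apply ball_R. rewrite Rminus_0_r, Rabs_right; lra.
Qed.

Lemma filterlim_pinfty_Rabs (F : R -> R) (l : R) :
  filterlim F (Rbar_locally p_infty) (locally l) ->
  forall eps, 0 < eps -> exists M, forall t, M < t -> Rabs (F t - l) < eps.
Proof.
  intros HF eps Heps. exact (proj1 (filterlim_locally F l) HF (mkposreal eps Heps)).
Qed.

Lemma Rpower_pos (x y : R) : 0 < Rpower x y.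
Proof. apply exp_pos. Qed.

Lemma is_derive_Rpower (x y : R) : 0 < x -> is_derive (fun u => Rpower u y) x (y * Rpower x (y - 1)).
Proof. intro. apply is_derive_Reals, derivable_pt_lim_power; auto. Qed.

Lemma continuous_Rpower (x y : R) : 0 < x -> continuous (fun u => Rpower u y) x.
Proof.
  intro Hx. apply (@ex_derive_continuous R_AbsRing R_NormedModule).
  eexists. now apply is_derive_Rpower.
Qed.

Lemma continuous_exp_opp (x : R) : continuous (fun u => exp (- u)) x.
Proof. apply (@ex_derive_continuous R_AbsRing R_NormedModule). auto_derive. auto. Qed.

Lemma exp_opp_le_1 (u : R) : 0 <= u -> exp (- u) <= 1.
Proof.
  intro Hu. rewrite <- exp_0.
  destruct Hu as [Hu|<-]; [left; apply exp_increasing; lra|right; f_equal; ring].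
Qed.

Lemma filterlim_Rpower_opp_pinfty (p : R) :
  0 < p -> filterlim (fun t => Rpower t (- p)) (Rbar_locally p_infty) (locally 0).
Proof.
  intros Hp. apply filterlim_locally. intros eps. exists (exp (- ln eps / p)). intros t Ht.
  assert (0 < t) by (pose proof (exp_pos (- ln eps / p)); lra).
  apply ball_R. rewrite Rminus_0_r, Rabs_right by (left; apply Rpower_pos).
  unfold Rpower. rewrite <- (exp_ln eps) by apply cond_pos. apply exp_increasing.
  apply ln_increasing in Ht; [|apply exp_pos]. rewrite ln_exp in Ht.
  apply (Rmult_lt_compat_l p) in Ht; auto.
  replace (p * (- ln eps / p)) with (- ln eps) in Ht by (field; lra). lra.
Qed.

Lemma filterlim_squeeze_0 {T} {F : (T -> Prop) -> Prop} {FF : Filter F} (g h : T -> R) :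
  F (fun x => 0 <= g x <= h x) -> filterlim h F (locally 0) -> filterlim g F (locally 0).
Proof.
  intros Hgh Hh. apply (filterlim_le_le (fun _ => 0) g h 0); [exact Hgh| |exact Hh].
  apply filterlim_const.
Qed.

Lemma ex_derive_n_of_is (f : R -> R) (n : nat) (x l : R) :
  is_derive_n f n x l -> ex_derive_n f n x.
Proof. destruct n; [intros; exact I|]. intro H. now exists l. Qed.

Lemma is_derive_n_exp_opp (k : nat) (x : R) :
  is_derive_n (fun t => exp (- t)) k x ((-1) ^ k * exp (- x)).
Proof.
  apply (is_derive_n_comp_opp exp k x); [|apply is_derive_n_exp].
  apply filter_forall. intros y j _. apply (ex_derive_n_of_is _ _ _ _ (is_derive_n_exp j y)).
Qed.

Lemma taylor_exp_opp (n : nat) (x : R) : 0 <= x ->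
  Rabs (exp (- x) - sum_f_R0 (fun k => / INR (fact k) * (- x) ^ k) n) <= x ^ S n / INR (fact (S n)).
Proof.
  intros [Hx|<-].
  - destruct (Taylor_Lagrange (fun t => exp (- t)) n 0 x Hx) as [z [Hz ->]].
    { intros t _ k _. apply (ex_derive_n_of_is _ _ _ _ (is_derive_n_exp_opp k t)). }
    rewrite Rminus_0_r, (is_derive_n_unique _ _ _ _ (is_derive_n_exp_opp (S n) z)).
    replace (sum_f_R0 _ n) with (sum_f_R0 (fun k => / INR (fact k) * (- x) ^ k) n).
    2: { apply sum_eq. intros k _. rewrite (is_derive_n_unique _ _ _ _ (is_derive_n_exp_opp k 0)).
         rewrite Ropp_0, exp_0. replace (- x) with (-1 * x) by ring.
         rewrite Rpow_mult_distr. unfold Rdiv. ring. }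
    replace (_ + _ - _) with (x ^ S n / INR (fact (S n)) * ((-1) ^ S n * exp (- z))) by ring.
    rewrite Rabs_mult, Rabs_mult, pow_1_abs, Rabs_right, Rabs_right.
    + rewrite Rmult_1_l. pose proof (exp_opp_le_1 z ltac:(lra)).
      assert (0 <= x ^ S n / INR (fact (S n))); [|nra].
      apply Rdiv_le_0_compat; [apply pow_le; lra|apply lt_0_INR, lt_O_fact].
    + left. apply exp_pos.
    + apply Rle_ge, Rdiv_le_0_compat; [apply pow_le; lra|apply lt_0_INR, lt_O_fact].
  - replace (sum_f_R0 _ n) with 1.
    + rewrite Ropp_0, exp_0, Rminus_diag, Rabs_R0, pow_i by lia. unfold Rdiv. lra.
    + induction n as [|n IH]; simpl; [field|]. rewrite <- IH, Ropp_0, Rmult_0_l. ring.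
Qed.

Lemma pow_le_fact_exp (N : nat) (x : R) : 0 <= x -> x ^ N <= INR (fact N) * exp x.
Proof.
  intros Hx. assert (Hf : 1 <= INR (fact N)) by (apply (le_INR 1), lt_O_fact).
  assert (He : 1 <= exp x) by (pose proof (exp_ineq1_le x); lra).
  destruct N as [|n]; [simpl; lra|]. destruct Hx as [Hx|<-]; [|rewrite pow_i by lia; nra].
  destruct (Taylor_Lagrange exp n 0 x Hx) as [z [Hz ->]].
  { intros t _ k _. apply (ex_derive_n_of_is _ _ _ _ (is_derive_n_exp k t)). }
  rewrite (is_derive_n_unique _ _ _ _ (is_derive_n_exp (S n) z)), Rminus_0_r.
  set (T := sum_f_R0 _ n).
  assert (0 <= T).
  { apply cond_pos_sum. intro m. rewrite (is_derive_n_unique _ _ _ _ (is_derive_n_exp m 0)).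
    apply Rmult_le_pos; [apply Rdiv_le_0_compat; [apply pow_le; lra|apply lt_0_INR, lt_O_fact]|].
    left. apply exp_pos. }
  assert (1 <= exp z) by (pose proof (exp_ineq1_le z); lra).
  pose proof (pow_lt x (S n) Hx).
  replace (INR (fact (S n)) * (T + x ^ S n / INR (fact (S n)) * exp z))
    with (INR (fact (S n)) * T + x ^ S n * exp z) by (field; lra).
  nra.
Qed.

Lemma RInt_antiderivative (F f : R -> R) (a b : R) :
  (forall x, Rmin a b <= x <= Rmax a b -> is_derive F x (f x)) ->
  (forall x, Rmin a b <= x <= Rmax a b -> continuous f x) ->
  RInt f a b = F b - F a.
Proof. intros Hd Hc. apply is_RInt_unique. exact (is_RInt_derive F f a b Hd Hc). Qed.

Lemma RInt_Rmult_l (f : R -> R) (a b c : R) :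
  ex_RInt f a b -> RInt (fun x => c * f x) a b = c * RInt f a b.
Proof. intro H. exact (RInt_scal f a b c H). Qed.

Lemma is_derive_ext_val (f g : R -> R) (x l l' : R) :
  (forall t, g t = f t) -> l = l' -> is_derive g x l -> is_derive f x l'.
Proof. intros Hfg <- Hg. exact (is_derive_ext g f x l Hfg Hg). Qed.

(** * Improper integrals on (0, +oo) *)

Section ContinuousOnPositive.

Variable f : R -> R.
Hypothesis f_cont : forall x, 0 < x -> continuous f x.

Lemma ex_RInt_pos (a b : R) : 0 < a -> 0 < b -> ex_RInt f a b.
Proof.
  intros Ha Hb. apply (@ex_RInt_continuous R_CompleteNormedModule).
  intros z [Hz _]. apply f_cont. eapply Rlt_le_trans; [|exact Hz].
  unfold Rmin; destruct Rle_dec; lra.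
Qed.

Lemma RInt_Chasles_pos (a b c : R) :
  0 < a -> 0 < b -> 0 < c -> RInt f a b + RInt f b c = RInt f a c.
Proof. intros. apply (RInt_Chasles f a b c); apply ex_RInt_pos; auto. Qed.

Lemma RInt_swap_pos (a b : R) : 0 < a -> 0 < b -> RInt f a b = - RInt f b a.
Proof. intros. rewrite <- (opp_RInt_swap f b a); [reflexivity|now apply ex_RInt_pos]. Qed.

Lemma RInt_ge_0_pos (a b : R) :
  (forall x, 0 < x -> 0 <= f x) -> 0 < a <= b -> 0 <= RInt f a b.
Proof.
  intros Hnn Hab. apply RInt_ge_0; [lra|apply ex_RInt_pos; lra|].
  intros x Hx. apply Hnn. lra.
Qed.

Lemma is_derive_RInt_1 (w : R) : 0 < w -> is_derive (fun b => RInt f 1 b) w (f w).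
Proof.
  intro Hw. apply (is_derive_RInt f (fun b => RInt f 1 b) 1 w); [|apply f_cont; lra].
  exists (mkposreal (w / 2) ltac:(lra)). intros y Hy. apply ball_R_between in Hy. simpl in Hy.
  apply (@RInt_correct R_CompleteNormedModule). apply ex_RInt_pos; lra.
Qed.

End ContinuousOnPositive.

Lemma eq_of_common_approx (l1 l2 : R) :
  (forall e, 0 < e -> exists y, Rabs (y - l1) < e /\ Rabs (y - l2) < e) -> l1 = l2.
Proof.
  intro H. apply NNPP. intro Hne.
  destruct (H (Rabs (l1 - l2) / 2)) as [y [H1 H2]]; [apply Rdiv_lt_0_compat; [apply Rabs_pos_lt; lra|lra]|].
  assert (Rabs (l1 - l2) <= Rabs (y - l1) + Rabs (y - l2)); [|lra].
  replace (l1 - l2) with (- (y - l1) + (y - l2)) by ring.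
  rewrite <- (Rabs_Ropp (y - l1)). apply Rabs_triang.
Qed.

Lemma is_int_0_inf_unique (f : R -> R) (l1 l2 : R) :
  is_int_0_inf f l1 -> is_int_0_inf f l2 -> l1 = l2.
Proof.
  intros H1 H2. apply eq_of_common_approx. intros e He.
  destruct (H1 e He) as [d1 [M1 [Hd1 K1]]]. destruct (H2 e He) as [d2 [M2 [Hd2 K2]]].
  pose proof (Rmin_pos d1 d2 Hd1 Hd2). pose proof (Rmin_l d1 d2). pose proof (Rmin_r d1 d2).
  pose proof (Rmax_l M1 M2). pose proof (Rmax_r M1 M2).
  destruct (K1 (Rmin d1 d2 / 2) (Rmax M1 M2 + 1)) as [p1 Q1]; [lra|lra|].
  destruct (K2 (Rmin d1 d2 / 2) (Rmax M1 M2 + 1)) as [p2 Q2]; [lra|lra|].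
  exists (RiemannInt p1). split; [exact Q1|]. now rewrite (RiemannInt_P5 p1 p2).
Qed.

Lemma is_int_0_to_unique (f : R -> R) (x l1 l2 : R) :
  is_int_0_to f x l1 -> is_int_0_to f x l2 -> l1 = l2.
Proof.
  intros H1 H2. apply eq_of_common_approx. intros e He.
  destruct (H1 e He) as [d1 [Hd1 K1]]. destruct (H2 e He) as [d2 [Hd2 K2]].
  pose proof (Rmin_pos d1 d2 Hd1 Hd2). pose proof (Rmin_l d1 d2). pose proof (Rmin_r d1 d2).
  destruct (K1 (Rmin d1 d2 / 2)) as [p1 Q1]; [lra|].
  destruct (K2 (Rmin d1 d2 / 2)) as [p2 Q2]; [lra|].
  exists (RiemannInt p1). split; [exact Q1|]. now rewrite (RiemannInt_P5 p1 p2).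
Qed.

(* Improper integrals over (0, +oo) are handled by splitting at 1: [A] is
   the integral over (0, 1] and [B] the one over [1, +oo). *)
Definition int_split (f : R -> R) (A B : R) : Prop :=
  (forall x, 0 < x -> continuous f x) /\
  filterlim (fun s => RInt f s 1) (at_right 0) (locally A) /\
  filterlim (fun t => RInt f 1 t) (Rbar_locally p_infty) (locally B).

Section IntSplit.

Variables (f g : R -> R) (A B C D : R).

Lemma is_int_0_inf_split : int_split f A B -> is_int_0_inf f (A + B).
Proof.
  intros [Hc [HA HB]] eps He.
  destruct (filterlim_at_right_0_Rabs _ _ HA (eps / 2)) as [d [Hd H1]]; [lra|].
  destruct (filterlim_pinfty_Rabs _ _ HB (eps / 2)) as [M H2]; [lra|].
  exists (Rmin d 1), (Rmax M 1). split; [apply Rmin_pos; lra|].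
  intros s t Hs Ht.
  pose proof (Rmin_l d 1). pose proof (Rmin_r d 1). pose proof (Rmax_l M 1). pose proof (Rmax_r M 1).
  assert (Hex : ex_RInt f s t) by (apply ex_RInt_pos; auto; lra).
  exists (ex_RInt_Reals_0 _ _ _ Hex). rewrite <- RInt_Reals, <- (RInt_Chasles_pos f Hc s 1 t) by lra.
  specialize (H1 s ltac:(lra)). specialize (H2 t ltac:(lra)).
  apply Rabs_def2 in H1. apply Rabs_def2 in H2. apply Rabs_def1; lra.
Qed.

Lemma Int_0_inf_split : int_split f A B -> Int_0_inf f = A + B.
Proof.
  intro H. unfold Int_0_inf. apply (is_int_0_inf_unique f); [|now apply is_int_0_inf_split].
  apply epsilon_spec. exists (A + B). now apply is_int_0_inf_split.
Qed.

Lemma Int_0_to_split (x : R) : int_split f A B -> 0 < x -> Int_0_to f x = A + RInt f 1 x.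
Proof.
  intros [Hc [HA HB]] Hx.
  assert (Hi : is_int_0_to f x (A + RInt f 1 x)).
  { intros eps He. destruct (filterlim_at_right_0_Rabs _ _ HA eps He) as [d [Hd H1]].
    exists (Rmin d 1). split; [apply Rmin_pos; lra|].
    intros s Hs. pose proof (Rmin_l d 1). pose proof (Rmin_r d 1).
    assert (Hex : ex_RInt f s x) by (apply ex_RInt_pos; auto; lra).
    exists (ex_RInt_Reals_0 _ _ _ Hex). rewrite <- RInt_Reals, <- (RInt_Chasles_pos f Hc s 1 x) by lra.
    replace (RInt f s 1 + RInt f 1 x - (A + RInt f 1 x)) with (RInt f s 1 - A) by ring.
    apply H1; lra. }
  unfold Int_0_to. apply (is_int_0_to_unique f x); [|exact Hi].
  apply epsilon_spec. now exists (A + RInt f 1 x).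
Qed.

Lemma int_split_ext : (forall x, 0 < x -> f x = g x) -> int_split f A B -> int_split g A B.
Proof.
  intros Hfg [Hc [HA HB]].
  assert (Hint : forall a b, 0 < a -> 0 < b -> RInt f a b = RInt g a b).
  { intros a b Ha Hb. apply RInt_ext. intros x [Hx _]. apply Hfg.
    eapply Rle_lt_trans; [|exact Hx]. unfold Rmin; destruct Rle_dec; lra. }
  split; [|split].
  - intros x Hx. apply (continuous_ext_loc _ f); [|now apply Hc].
    exists (mkposreal x Hx). intros y Hy. apply ball_R_between in Hy. simpl in Hy. apply Hfg. lra.
  - apply (filterlim_ext_loc (fun s => RInt f s 1)); [|exact HA].
    apply (at_right_0_intro _ 1); [lra|]. intros s Hs. apply Hint; lra.
  - apply (filterlim_ext_loc (fun t => RInt f 1 t)); [|exact HB].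
    exists 1. intros t Ht. apply Hint; lra.
Qed.

Lemma int_split_plus :
  int_split f A B -> int_split g C D -> int_split (fun x => f x + g x) (A + C) (B + D).
Proof.
  intros [Hf [HA HB]] [Hg [HC HD]].
  assert (Hint : forall a b, 0 < a -> 0 < b -> RInt f a b + RInt g a b = RInt (fun x => f x + g x) a b).
  { intros a b Ha Hb. symmetry. apply (RInt_plus f g); apply ex_RInt_pos; auto. }
  split; [|split].
  - intros x Hx. apply (continuous_plus f g); auto.
  - apply (filterlim_ext_loc (fun s => RInt f s 1 + RInt g s 1)); [|now apply filterlim_Rplus].
    apply (at_right_0_intro _ 1); [lra|]. intros s Hs. apply Hint; lra.
  - apply (filterlim_ext_loc (fun t => RInt f 1 t + RInt g 1 t)); [|now apply filterlim_Rplus].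
    exists 1. intros t Ht. apply Hint; lra.
Qed.

Lemma int_split_scal (c : R) : int_split f A B -> int_split (fun x => c * f x) (c * A) (c * B).
Proof.
  intros [Hf [HA HB]].
  assert (Hint : forall a b, 0 < a -> 0 < b -> c * RInt f a b = RInt (fun x => c * f x) a b).
  { intros a b Ha Hb. symmetry. apply (RInt_scal f); apply ex_RInt_pos; auto. }
  split; [|split].
  - intros x Hx. apply (continuous_mult (fun _ => c) f); [apply continuous_const|auto].
  - apply (filterlim_ext_loc (fun s => c * RInt f s 1)); [|now apply filterlim_Rmult_l].
    apply (at_right_0_intro _ 1); [lra|]. intros s Hs. apply Hint; lra.
  - apply (filterlim_ext_loc (fun t => c * RInt f 1 t)); [|now apply filterlim_Rmult_l].
    exists 1. intros t Ht. apply Hint; lra.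
Qed.

Lemma int_split_le :
  (forall x, 0 < x -> f x <= g x) -> int_split f A B -> int_split g C D -> A <= C /\ B <= D.
Proof.
  intros Hfg [Hf [HA HB]] [Hg [HC HD]]. split.
  - apply (filterlim_le (F := at_right 0) (fun s => RInt f s 1) (fun s => RInt g s 1) A C);
      [|exact HA|exact HC].
    apply (at_right_0_intro _ 1); [lra|]. intros s Hs.
    apply RInt_le; [lra|apply ex_RInt_pos; auto; lra|apply ex_RInt_pos; auto; lra|].
    intros x Hx. apply Hfg. lra.
  - apply (filterlim_le (F := Rbar_locally p_infty) (fun t => RInt f 1 t) (fun t => RInt g 1 t) B D);
      [|exact HB|exact HD].
    exists 1. intros t Ht.
    apply RInt_le; [lra|apply ex_RInt_pos; auto; lra|apply ex_RInt_pos; auto; lra|].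
    intros x Hx. apply Hfg. lra.
Qed.

End IntSplit.

Section NonnegIntSplit.

Variable f : R -> R.
Hypothesis f_cont : forall x, 0 < x -> continuous f x.
Hypothesis f_nonneg : forall x, 0 < x -> 0 <= f x.

Lemma RInt_antitone_left (s s' : R) : 0 < s -> s <= s' <= 1 -> RInt f s' 1 <= RInt f s 1.
Proof.
  intros Hs Hss'. rewrite <- (RInt_Chasles_pos f f_cont s s' 1) by lra.
  pose proof (RInt_ge_0_pos f f_cont s s' f_nonneg ltac:(lra)). lra.
Qed.

Lemma RInt_monotone_right (t t' : R) : 1 <= t <= t' -> RInt f 1 t <= RInt f 1 t'.
Proof.
  intros Htt'. rewrite <- (RInt_Chasles_pos f f_cont 1 t t') by lra.
  pose proof (RInt_ge_0_pos f f_cont t t' f_nonneg ltac:(lra)). lra.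
Qed.

Lemma int_split_RInt_le (A B : R) :
  int_split f A B ->
  (forall s, 0 < s <= 1 -> RInt f s 1 <= A) /\ (forall t, 1 <= t -> RInt f 1 t <= B).
Proof.
  intros [_ [HA HB]]. split.
  - intros s Hs.
    apply (filterlim_le (F := at_right 0) (fun _ => RInt f s 1) (fun s' => RInt f s' 1)
      (RInt f s 1) A); [|apply filterlim_const|exact HA].
    apply (at_right_0_intro _ s); [lra|]. intros s' Hs'. apply RInt_antitone_left; lra.
  - intros t Ht.
    apply (filterlim_le (F := Rbar_locally p_infty) (fun _ => RInt f 1 t) (fun t' => RInt f 1 t')
      (RInt f 1 t) B); [|apply filterlim_const|exact HB].
    exists t. intros t' Ht'. apply RInt_monotone_right; lra.
Qed.

Lemma int_split_of_bounded (M : R) :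
  (forall s, 0 < s <= 1 -> RInt f s 1 <= M) -> (forall t, 1 <= t -> RInt f 1 t <= M) ->
  exists A B, int_split f A B.
Proof.
  intros H0 Hinf.
  destruct (filterlim_at_right_0_antitone (fun s => RInt f s 1) M) as [A HA]; auto.
  { intros s s' Hs Hss'. now apply RInt_antitone_left. }
  destruct (filterlim_pinfty_monotone (fun t => RInt f 1 t) M) as [B HB]; auto.
  { intros t t' Htt'. now apply RInt_monotone_right. }
  now exists A, B.
Qed.

End NonnegIntSplit.

Lemma int_split_of_le (f g : R -> R) (A B : R) :
  (forall x, 0 < x -> continuous f x) -> (forall x, 0 < x -> 0 <= f x <= g x) ->
  int_split g A B -> exists A' B', int_split f A' B'.
Proof.
  intros Hf Hfg Hg. pose proof Hg as [Hgc _].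
  assert (Hgnn : forall x, 0 < x -> 0 <= g x) by (intros x Hx; pose proof (Hfg x Hx); lra).
  destruct (int_split_RInt_le g Hgc Hgnn A B Hg) as [HA HB].
  pose proof (RInt_ge_0_pos g Hgc 1 1 Hgnn ltac:(lra)).
  pose proof (HA 1 ltac:(lra)). pose proof (HB 1 ltac:(lra)).
  assert (Hle : forall a b, 0 < a <= b -> RInt f a b <= RInt g a b).
  { intros a b Hab. apply RInt_le; [lra|apply ex_RInt_pos; auto; lra|apply ex_RInt_pos; auto; lra|].
    intros x Hx. apply Hfg. lra. }
  apply (int_split_of_bounded f Hf ltac:(intros x Hx; apply Hfg, Hx) (A + B)).
  - intros s Hs. pose proof (Hle s 1 ltac:(lra)). pose proof (HA s Hs). lra.
  - intros t Ht. pose proof (Hle 1 t ltac:(lra)). pose proof (HB t Ht). lra.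
Qed.

Lemma int_split_of_derive (f F : R -> R) (F0 Finf : R) :
  (forall x, 0 < x -> continuous f x) -> (forall x, 0 < x -> is_derive F x (f x)) ->
  filterlim F (at_right 0) (locally F0) -> filterlim F (Rbar_locally p_infty) (locally Finf) ->
  int_split f (F 1 - F0) (Finf - F 1).
Proof.
  intros Hc Hd H0 Hinf.
  assert (HR : forall a b, 0 < a -> 0 < b -> RInt f a b = F b - F a).
  { intros a b Ha Hb. assert (0 < Rmin a b) by (unfold Rmin; destruct Rle_dec; lra).
    apply RInt_antiderivative; intros x Hx; [apply Hd|apply Hc]; lra. }
  split; [exact Hc|split].
  - apply (filterlim_ext_loc (fun s => F 1 - F s)).
    + apply (at_right_0_intro _ 1); [lra|]. intros s Hs. rewrite HR; lra.
    + apply filterlim_Rminus; [apply filterlim_const|exact H0].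
  - apply (filterlim_ext_loc (fun t => F t - F 1)).
    + exists 1. intros t Ht. rewrite HR; lra.
    + apply filterlim_Rminus; [exact Hinf|apply filterlim_const].
Qed.

Lemma int_split_sum (f : nat -> R -> R) (V c : nat -> R) (n : nat) :
  (forall k, exists A B, int_split (f k) A B /\ A + B = V k) ->
  exists A B, int_split (fun x => sum_f_R0 (fun k => c k * f k x) n) A B /\
    A + B = sum_f_R0 (fun k => c k * V k) n.
Proof.
  intro Hf. induction n as [|n [A [B [H HS]]]].
  - destruct (Hf 0%nat) as [A [B [H HS]]]. exists (c 0%nat * A), (c 0%nat * B). simpl.
    split; [now apply int_split_scal|]. rewrite <- HS. ring.
  - destruct (Hf (S n)) as [A' [B' [H' HS']]].
    exists (A + c (S n) * A'), (B + c (S n) * B'). simpl.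
    split; [now apply int_split_plus, int_split_scal|]. rewrite <- HS, <- HS'. ring.
Qed.

(** * The Gamma function *)

Definition gamma_kernel (p u : R) : R := Rpower u (p - 1) * exp (- u).

Lemma continuous_gamma_kernel (p x : R) : 0 < x -> continuous (gamma_kernel p) x.
Proof.
  intro Hx. apply (continuous_mult (fun u => Rpower u (p - 1)) (fun u => exp (- u))).
  - now apply continuous_Rpower.
  - apply continuous_exp_opp.
Qed.

Lemma gamma_kernel_pos (p u : R) : 0 < u -> 0 < gamma_kernel p u.
Proof. intro. apply Rmult_lt_0_compat; [apply Rpower_pos|apply exp_pos]. Qed.

Lemma RInt_Rpower_le (p s : R) : 0 < p -> 0 < s <= 1 -> RInt (fun u => Rpower u (p - 1)) s 1 <= / p.
Proof.
  intros Hp Hs.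
  assert (E : RInt (fun u => Rpower u (p - 1)) s 1 = / p * Rpower 1 p - / p * Rpower s p).
  { apply (RInt_antiderivative (fun u => / p * Rpower u p)); intros x Hx;
      assert (0 < x) by (unfold Rmin in Hx; destruct Rle_dec; lra).
    - apply (is_derive_ext (fun u => / p * Rpower u p)); [reflexivity|].
      replace (Rpower x (p - 1)) with (/ p * (p * Rpower x (p - 1))) by (field; lra).
      apply is_derive_scal. now apply is_derive_Rpower.
    - now apply continuous_Rpower. }
  rewrite E. unfold Rpower at 1. rewrite ln_1, Rmult_0_r, exp_0.
  pose proof (Rpower_pos s p). pose proof (Rinv_0_lt_compat p Hp). nra.
Qed.

Lemma RInt_exp_half_le (K t : R) :
  0 <= K -> 1 <= t -> RInt (fun u => K * exp (- (u / 2))) 1 t <= 2 * K.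
Proof.
  intros HK Ht.
  rewrite (RInt_antiderivative (fun u => - (2 * K * exp (- (u / 2))))).
  - simpl. pose proof (exp_pos (- (t / 2))). pose proof (exp_opp_le_1 (1 / 2) ltac:(lra)). nra.
  - intros x _. auto_derive; auto. unfold Rdiv. field.
  - intros x _. apply (@ex_derive_continuous R_AbsRing R_NormedModule). auto_derive. auto.
Qed.

(* Near 0 the kernel is below u^(p-1); near +oo it is below 2^N N! e^(-u/2) once N >= p - 1. *)
Lemma gamma_kernel_int_split (p : R) : 0 < p -> exists A B, int_split (gamma_kernel p) A B.
Proof.
  intros Hp. destruct (INR_archimed 1 (p - 1)) as [N HN]; [lra|].
  set (K := 2 ^ N * INR (fact N)).
  assert (HK : 0 < K) by (apply Rmult_lt_0_compat; [apply pow_lt; lra|apply lt_0_INR, lt_O_fact]).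
  assert (Hnn : forall x, 0 < x -> 0 <= gamma_kernel p x) by (intros; left; now apply gamma_kernel_pos).
  apply (int_split_of_bounded _ (continuous_gamma_kernel p) Hnn (/ p + 2 * K)).
  - intros s Hs. apply Rle_trans with (RInt (fun u => Rpower u (p - 1)) s 1).
    + apply RInt_le; [lra|apply ex_RInt_pos; [apply continuous_gamma_kernel|lra..]|..].
      * apply ex_RInt_pos; [intros; now apply continuous_Rpower|lra..].
      * intros x Hx. unfold gamma_kernel. pose proof (Rpower_pos x (p - 1)).
        pose proof (exp_opp_le_1 x ltac:(lra)). nra.
    + pose proof (RInt_Rpower_le p s Hp Hs). lra.
  - intros t Ht. apply Rle_trans with (RInt (fun u => K * exp (- (u / 2))) 1 t).
    + apply RInt_le; [lra|apply ex_RInt_pos; [apply continuous_gamma_kernel|lra..]|..].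
      * apply (@ex_RInt_continuous R_CompleteNormedModule). intros z _.
        apply (@ex_derive_continuous R_AbsRing R_NormedModule). auto_derive. auto.
      * intros x Hx. unfold gamma_kernel.
        assert (Rpower x (p - 1) <= x ^ N) by (rewrite <- Rpower_pow by lra; apply Rle_Rpower; lra).
        assert (x ^ N <= K * exp (x / 2)).
        { replace (x ^ N) with (2 ^ N * (x / 2) ^ N) by (rewrite <- Rpow_mult_distr; f_equal; field).
          unfold K. rewrite Rmult_assoc. apply Rmult_le_compat_l; [apply pow_le; lra|].
          apply pow_le_fact_exp. lra. }
        replace (K * exp (- (x / 2))) with (K * exp (x / 2) * exp (- x))
          by (rewrite Rmult_assoc, <- exp_plus; do 2 f_equal; field).
        apply Rmult_le_compat_r; [left; apply exp_pos|lra].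
    + pose proof (RInt_exp_half_le K t ltac:(lra) Ht). pose proof (Rinv_0_lt_compat p Hp). lra.
Qed.

Lemma Gamma_fun_split (p A B : R) : int_split (gamma_kernel p) A B -> Gamma_fun p = A + B.
Proof. apply Int_0_inf_split. Qed.

Lemma Gamma_fun_pos (p : R) : 0 < p -> 0 < Gamma_fun p.
Proof.
  intros Hp. destruct (gamma_kernel_int_split p Hp) as [A [B H]].
  rewrite (Gamma_fun_split p A B H).
  assert (Hnn : forall x, 0 < x -> 0 <= gamma_kernel p x) by (intros; left; now apply gamma_kernel_pos).
  destruct (int_split_RInt_le _ (continuous_gamma_kernel p) Hnn A B H) as [H1 H2].
  pose proof (H1 (1 / 2) ltac:(lra)). pose proof (H2 1 ltac:(lra)).
  pose proof (RInt_ge_0_pos _ (continuous_gamma_kernel p) 1 1 Hnn ltac:(lra)).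
  assert (0 < RInt (gamma_kernel p) (1 / 2) 1); [|lra].
  apply RInt_gt_0; [lra|intros; now apply gamma_kernel_pos; lra|].
  intros x Hx. apply continuous_gamma_kernel. lra.
Qed.

Lemma filterlim_pow_exp_pinfty (m : nat) :
  filterlim (fun u => u ^ m * exp (- u)) (Rbar_locally p_infty) (locally 0).
Proof.
  apply (filterlim_squeeze_0 _ (fun u => INR (fact (S m)) * Rpower u (- (1)))).
  - exists 0. intros u Hu. rewrite Rpower_Ropp, Rpower_1 by lra.
    pose proof (pow_le_fact_exp (S m) u ltac:(lra)) as H. set (c := INR (fact (S m))) in *.
    pose proof (pow_lt u m Hu). pose proof (exp_pos u). rewrite exp_Ropp. simpl pow in H. split.
    + left. apply Rmult_lt_0_compat; [lra|now apply Rinv_0_lt_compat].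
    + apply (Rmult_le_reg_r (u * exp u)); [nra|].
      replace (u ^ m * / exp u * (u * exp u)) with (u * u ^ m) by (field; lra).
      replace (c * / u * (u * exp u)) with (c * exp u) by (field; lra).
      exact H.
  - rewrite <- (Rmult_0_r (INR (fact (S m)))). apply filterlim_Rmult_l, filterlim_Rpower_opp_pinfty. lra.
Qed.

Lemma int_split_pow_exp_derivative (m : nat) :
  exists A B, int_split (fun u => u ^ m * exp (- u) - INR m * (u ^ pred m * exp (- u))) A B
    /\ A + B = 0 ^ m.
Proof.
  set (F := fun u => - (u ^ m * exp (- u))).
  assert (HFc : forall x, continuous F x).
  { intro x. apply (@ex_derive_continuous R_AbsRing R_NormedModule). unfold F. auto_derive. auto. }
  destruct (int_split_of_derive (fun u => u ^ m * exp (- u) - INR m * (u ^ pred m * exp (- u))) F (F 0) 0)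
    as [Hc [HA HB]].
  - intros x _. apply (@ex_derive_continuous R_AbsRing R_NormedModule). auto_derive. auto.
  - intros x _. unfold F. auto_derive; auto. ring.
  - apply filterlim_at_right_continuous, HFc.
  - rewrite <- Ropp_0. unfold F. apply (filterlim_comp _ _ _ _ Ropp _ _ _ (filterlim_pow_exp_pinfty m)).
    apply (filterlim_opp 0).
  - exists (F 1 - F 0), (0 - F 1). split; [repeat split; assumption|].
    unfold F. rewrite Ropp_0, exp_0. ring.
Qed.

Lemma int_split_pow_exp (n : nat) :
  exists A B, int_split (fun u => u ^ n * exp (- u)) A B /\ A + B = INR (fact n).
Proof.
  induction n as [|n [A [B [HI HS]]]].
  - destruct (int_split_pow_exp_derivative 0) as [A [B [H HS]]]. exists A, B. split; [|exact HS].
    revert H. apply int_split_ext. intros; simpl; ring.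
  - destruct (int_split_pow_exp_derivative (S n)) as [A' [B' [H HS']]].
    exists (A' + INR (S n) * A), (B' + INR (S n) * B). split.
    + pose proof (int_split_plus _ _ _ _ _ _ H (int_split_scal _ _ _ (INR (S n)) HI)) as Hsum.
      revert Hsum. apply int_split_ext. intros. simpl. ring.
    + replace (A' + INR (S n) * A + (B' + INR (S n) * B)) with (A' + B' + INR (S n) * (A + B)) by ring.
      rewrite HS, HS', fact_simpl, mult_INR. simpl. ring.
Qed.

Lemma gamma_kernel_nat (n : nat) (u : R) : 0 < u -> gamma_kernel (INR n + 1) u = u ^ n * exp (- u).
Proof.
  intro Hu. unfold gamma_kernel. replace (INR n + 1 - 1) with (INR n) by ring.
  now rewrite Rpower_pow.
Qed.

Lemma gamma_kernel_nat_int_split (n : nat) :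
  exists A B, int_split (gamma_kernel (INR n + 1)) A B /\ A + B = INR (fact n).
Proof.
  destruct (int_split_pow_exp n) as [A [B [H HS]]]. exists A, B. split; [|exact HS].
  apply (int_split_ext (fun u => u ^ n * exp (- u))); [|exact H].
  intros. symmetry. now apply gamma_kernel_nat.
Qed.

Lemma Rpower_le_pow_split (u N a : R) (J : nat) :
  0 < u -> 0 < N -> 0 <= a <= INR J -> Rpower u a <= Rpower N a * (1 + (u / N) ^ J).
Proof.
  intros Hu HN Ha. assert (0 < u / N) by (apply Rdiv_lt_0_compat; auto).
  pose proof (pow_le (u / N) J ltac:(lra)). pose proof (Rpower_pos N a).
  destruct (Rle_dec u N) as [Hle|Hle].
  - apply Rle_trans with (Rpower N a); [apply Rle_Rpower_l; lra|nra].
  - replace (Rpower u a) with (Rpower N a * Rpower (u / N) a)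
      by (rewrite Rpower_mult_distr by auto; f_equal; field; lra).
    apply Rmult_le_compat_l; [lra|].
    assert (1 <= u / N) by (apply (Rmult_le_reg_r N); auto; unfold Rdiv; rewrite Rmult_assoc, Rinv_l; lra).
    apply Rle_trans with ((u / N) ^ J); [|lra].
    rewrite <- Rpower_pow by auto. apply Rle_Rpower; lra.
Qed.

Lemma fact_add_le (n J : nat) : (J <= n)%nat -> (fact (n + J) <= fact n * (2 * n) ^ J)%nat.
Proof.
  induction J as [|J IH]; intros HJ; [rewrite Nat.add_0_r; simpl; lia|].
  replace (n + S J)%nat with (S (n + J)) by lia. rewrite fact_simpl, Nat.pow_succ_r'.
  apply Nat.le_trans with (S (n + J) * (fact n * (2 * n) ^ J))%nat; [apply Nat.mul_le_mono_l, IH; lia|].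
  replace (fact n * (2 * n * (2 * n) ^ J))%nat with ((2 * n) * (fact n * (2 * n) ^ J))%nat by ring.
  apply Nat.mul_le_mono_r. lia.
Qed.

(* Integrate u^(n+a) <= n^a (u^n + u^(n+J) / n^J) against e^(-u). *)
Lemma Gamma_fun_le_pow_fact (n J : nat) (a : R) : (1 <= n)%nat -> (J <= n)%nat -> 0 <= a <= INR J ->
  Gamma_fun (INR n + 1 + a) <= Rpower (INR n) a * INR (fact n) * (1 + 2 ^ J).
Proof.
  intros Hn HJ Ha.
  assert (HN : 0 < INR n) by (apply lt_0_INR; lia).
  destruct (gamma_kernel_int_split (INR n + 1 + a)) as [A [B H1]]; [pose proof (pos_INR n); lra|].
  destruct (gamma_kernel_nat_int_split n) as [A2 [B2 [H2 S2]]].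
  destruct (gamma_kernel_nat_int_split (n + J)) as [A3 [B3 [H3 S3]]].
  set (c := / INR n ^ J).
  pose proof (int_split_scal _ _ _ (Rpower (INR n) a)
    (int_split_plus _ _ _ _ _ _ H2 (int_split_scal _ _ _ c H3))) as Hbound.
  assert (Hle : forall u, 0 < u -> gamma_kernel (INR n + 1 + a) u <=
    Rpower (INR n) a * (gamma_kernel (INR n + 1) u + c * gamma_kernel (INR (n + J) + 1) u)).
  - intros u Hu. rewrite !gamma_kernel_nat by exact Hu. unfold gamma_kernel.
    replace (INR n + 1 + a - 1) with (INR n + a) by ring.
    rewrite Rpower_plus, Rpower_pow, pow_add by lra.
    pose proof (Rpower_le_pow_split u (INR n) a J Hu HN Ha) as H.
    replace ((u / INR n) ^ J) with (u ^ J * c) in H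
      by (unfold c, Rdiv; rewrite Rpow_mult_distr, pow_inv; ring).
    pose proof (pow_lt u n Hu). pose proof (exp_pos (- u)).
    replace (Rpower (INR n) a * (u ^ n * exp (- u) + c * (u ^ n * u ^ J * exp (- u))))
      with (u ^ n * exp (- u) * (Rpower (INR n) a * (1 + u ^ J * c))) by ring.
    replace (u ^ n * Rpower u a * exp (- u)) with (u ^ n * exp (- u) * Rpower u a) by ring.
    apply Rmult_le_compat_l; nra.
  - destruct (int_split_le _ _ _ _ _ _ Hle H1 Hbound) as [L1 L2].
    rewrite (Gamma_fun_split _ _ _ H1).
    apply Rle_trans with (Rpower (INR n) a * ((A2 + B2) + c * (A3 + B3))); [lra|].
    rewrite S2, S3, Rmult_assoc. apply Rmult_le_compat_l; [left; apply Rpower_pos|].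
    pose proof (le_INR _ _ (fact_add_le n J HJ)) as Hf.
    rewrite mult_INR, pow_INR, mult_INR, Rpow_mult_distr in Hf. simpl (INR 2) in Hf.
    assert (c * INR (fact (n + J)) <= INR (fact n) * 2 ^ J); [|lra].
    unfold c. apply (Rmult_le_reg_l (INR n ^ J)); [apply pow_lt; auto|].
    rewrite <- Rmult_assoc, Rinv_r, Rmult_1_l by (apply pow_nonzero; lra).
    replace (1 + 1) with 2 in Hf by ring. lra.
Qed.

(* Integrate u^(n+b) <= u^(n+a) + 1 against e^(-u). *)
Lemma fact_le_Gamma_fun (n b : nat) (a : R) :
  INR b <= a -> INR (fact (n + b)) <= Gamma_fun (INR n + 1 + a) + 1.
Proof.
  intros Hab. pose proof (pos_INR b). pose proof (pos_INR n).
  destruct (gamma_kernel_int_split (INR n + 1 + a)) as [A [B H1]]; [lra|].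
  destruct (gamma_kernel_nat_int_split (n + b)) as [A2 [B2 [H2 S2]]].
  destruct (gamma_kernel_nat_int_split 0) as [A3 [B3 [H3 S3]]].
  assert (Hle : forall u, 0 < u -> gamma_kernel (INR (n + b) + 1) u <=
    gamma_kernel (INR n + 1 + a) u + gamma_kernel (INR 0 + 1) u).
  - intros u Hu. rewrite !gamma_kernel_nat by exact Hu. unfold gamma_kernel.
    replace (INR n + 1 + a - 1) with (INR n + a) by ring.
    pose proof (exp_pos (- u)). pose proof (Rpower_pos u (INR n + a)).
    assert (u ^ (n + b) <= Rpower u (INR n + a) + 1); [|simpl; nra].
    destruct (Rle_dec 1 u).
    + rewrite <- Rpower_pow by lra.
      assert (Rpower u (INR (n + b)) <= Rpower u (INR n + a)); [|lra].
      apply Rle_Rpower; [lra|]. rewrite plus_INR. lra.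
    + pose proof (pow_incr u 1 (n + b) ltac:(lra)). rewrite pow1 in *. lra.
  - destruct (int_split_le _ _ _ _ _ _ Hle H2 (int_split_plus _ _ _ _ _ _ H1 H3)) as [L1 L2].
    rewrite (Gamma_fun_split _ _ _ H1), <- S2. simpl in S3. lra.
Qed.

(** * The regularized upper incomplete Gamma function *)

Lemma is_derive_RInt_1_div (f : R -> R) (X r : R) :
  (forall x, 0 < x -> continuous f x) -> 0 < X -> 0 < r ->
  is_derive (fun r => RInt f 1 (X / r)) r (- X / r ^ 2 * f (X / r)).
Proof.
  intros Hf HX Hr.
  apply (is_derive_comp (fun b => RInt f 1 b) (fun r => X / r)).
  - apply is_derive_RInt_1; auto. now apply Rdiv_lt_0_compat.
  - auto_derive; [lra|]. field. lra.
Qed.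

Lemma Rpower_div_shift (X r v p : R) : 0 < X -> 0 < r ->
  Rpower (X / r) (v - 1) * Rpower r (- p) = Rpower X (- p) * Rpower (X / r) (v + p - 1).
Proof.
  intros HX Hr. unfold Rpower. rewrite <- !exp_plus. f_equal.
  unfold Rdiv. rewrite ln_mult, ln_Rinv by (auto; now apply Rinv_0_lt_compat). ring.
Qed.

(* Q(v, w) = Gamma(v)^-1 int_w^oo u^(v-1) e^(-u) du, where Gamma(v) = A + B is split at 1. *)
Definition upper_gamma_reg (v A B w : R) : R := (B - RInt (gamma_kernel v) 1 w) / (A + B).

Section UpperGamma.

Variables v A0 B0 : R.
Hypothesis v_pos : 0 < v.
Hypothesis kernel_split : int_split (gamma_kernel v) A0 B0.

Lemma Gamma_split_pos : 0 < A0 + B0.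
Proof. rewrite <- (Gamma_fun_split _ _ _ kernel_split). now apply Gamma_fun_pos. Qed.

Lemma upper_tail_bounds (w : R) : 0 < w -> 0 <= B0 - RInt (gamma_kernel v) 1 w <= A0 + B0.
Proof.
  intros Hw.
  assert (Hnn : forall x, 0 < x -> 0 <= gamma_kernel v x) by (intros; left; now apply gamma_kernel_pos).
  destruct (int_split_RInt_le _ (continuous_gamma_kernel v) Hnn A0 B0 kernel_split) as [H1 H2].
  pose proof (H1 1 ltac:(lra)). pose proof (H2 1 ltac:(lra)).
  assert (RInt (gamma_kernel v) 1 1 = 0) by exact (RInt_point 1 (gamma_kernel v)).
  destruct (Rle_dec 1 w).
  - pose proof (H2 w r). pose proof (RInt_ge_0_pos _ (continuous_gamma_kernel v) 1 w Hnn ltac:(lra)). lra.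
  - rewrite RInt_swap_pos by (apply continuous_gamma_kernel || lra).
    pose proof (H1 w ltac:(lra)).
    pose proof (RInt_ge_0_pos _ (continuous_gamma_kernel v) w 1 Hnn ltac:(lra)). lra.
Qed.

Lemma upper_gamma_reg_bounds (w : R) : 0 < w -> 0 <= upper_gamma_reg v A0 B0 w <= 1.
Proof.
  intros Hw. pose proof (upper_tail_bounds w Hw). pose proof Gamma_split_pos. unfold upper_gamma_reg.
  split; [apply Rdiv_le_0_compat; lra|].
  apply (Rmult_le_reg_r (A0 + B0)); [lra|]. unfold Rdiv. rewrite Rmult_assoc, Rinv_l; lra.
Qed.

Lemma is_derive_upper_gamma_reg_div (X r : R) : 0 < X -> 0 < r ->
  is_derive (fun r => upper_gamma_reg v A0 B0 (X / r)) r
    (gamma_kernel v (X / r) * X / ((A0 + B0) * r ^ 2)).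
Proof.
  intros HX Hr. pose proof Gamma_split_pos. unfold upper_gamma_reg.
  pose proof (is_derive_RInt_1_div _ X r (continuous_gamma_kernel v) HX Hr) as D.
  apply (is_derive_ext (fun r => / (A0 + B0) * (B0 - RInt (gamma_kernel v) 1 (X / r)))).
  { intro t. simpl. unfold Rdiv. ring. }
  replace (gamma_kernel v (X / r) * X / ((A0 + B0) * r ^ 2))
    with (/ (A0 + B0) * (0 - - X / r ^ 2 * gamma_kernel v (X / r))) by (field; lra).
  exact (is_derive_scal _ _ _ _ (is_derive_minus _ _ _ _ _ (is_derive_const B0 r) D)).
Qed.

Lemma gamma_kernel_shift (p u : R) : 0 < u -> gamma_kernel (v + p) u = Rpower u p * gamma_kernel v u.
Proof.
  intro. unfold gamma_kernel. replace (v + p - 1) with (p + (v - 1)) by ring.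
  rewrite Rpower_plus. ring.
Qed.

(* w^p int_w^oo u^(v-1) e^(-u) du <= int_w^oo u^(v+p-1) e^(-u) du, which tends to 0. *)
Lemma upper_tail_decay (p : R) : 0 < p ->
  filterlim (fun w => Rpower w p * (B0 - RInt (gamma_kernel v) 1 w)) (Rbar_locally p_infty) (locally 0).
Proof.
  intros Hp. destruct (gamma_kernel_int_split (v + p)) as [Ak [Bk [_ [_ HBk]]]]; [lra|].
  destruct kernel_split as [Hc [_ HB0]].
  apply (filterlim_squeeze_0 _ (fun w => Bk - RInt (gamma_kernel (v + p)) 1 w)).
  - exists 1. intros w Hw. split.
    + apply Rmult_le_pos; [left; apply Rpower_pos|apply upper_tail_bounds; lra].
    + apply (filterlim_le (F := Rbar_locally p_infty)
        (fun t => Rpower w p * (RInt (gamma_kernel v) 1 t - RInt (gamma_kernel v) 1 w))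
        (fun t => RInt (gamma_kernel (v + p)) 1 t - RInt (gamma_kernel (v + p)) 1 w)
        (Rpower w p * (B0 - RInt (gamma_kernel v) 1 w)) (Bk - RInt (gamma_kernel (v + p)) 1 w)).
      * exists w. intros t Ht.
        rewrite <- (RInt_Chasles_pos _ (continuous_gamma_kernel v) 1 w t),
          <- (RInt_Chasles_pos _ (continuous_gamma_kernel (v + p)) 1 w t) by lra.
        rewrite !Rplus_minus_l, <- RInt_Rmult_l by (apply ex_RInt_pos; [apply continuous_gamma_kernel|lra..]).
        apply RInt_le; [lra| |apply ex_RInt_pos; [apply continuous_gamma_kernel|lra..]|].
        { apply ex_RInt_pos; [|lra..]. intros x Hx. apply (continuous_mult (fun _ => Rpower w p)).
          - apply continuous_const.
          - now apply continuous_gamma_kernel. }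
        intros u Hu. rewrite gamma_kernel_shift by lra.
        apply Rmult_le_compat_r; [left; apply gamma_kernel_pos; lra|apply Rle_Rpower_l; lra].
      * apply filterlim_Rmult_l, filterlim_Rminus; [exact HB0|apply filterlim_const].
      * apply filterlim_Rminus; [exact HBk|apply filterlim_const].
  - replace 0 with (Bk - Bk) by ring. apply filterlim_Rminus; [apply filterlim_const|exact HBk].
Qed.

(* A primitive of Q(v, X / r) r^(-p-1): integration by parts, with the remaining integral
   turned into one of u^(v+p-1) e^(-u) by the substitution u = X / r. *)
Lemma is_derive_moment_primitive (X p r : R) : 0 < X -> 0 < p -> 0 < r ->
  is_derive (fun r => - (upper_gamma_reg v A0 B0 (X / r) * Rpower r (- p)) / p
      - Rpower X (- p) / (p * (A0 + B0)) * RInt (gamma_kernel (v + p)) 1 (X / r)) r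
    (upper_gamma_reg v A0 B0 (X / r) * Rpower r (- p - 1)).
Proof.
  intros HX Hp Hr. pose proof Gamma_split_pos.
  assert (Hw : 0 < X / r) by now apply Rdiv_lt_0_compat.
  pose proof (is_derive_mult _ _ _ _ _ (is_derive_upper_gamma_reg_div X r HX Hr)
    (is_derive_Rpower r (- p) Hr) Rmult_comm) as DQ.
  pose proof (is_derive_RInt_1_div _ X r (continuous_gamma_kernel (v + p)) HX Hr) as DI.
  refine (is_derive_ext_val _ _ _ _ _ _ _ (is_derive_plus _ _ _ _ _
    (is_derive_scal _ _ (- / p) _ DQ) (is_derive_scal _ _ (- (Rpower X (- p) / (p * (A0 + B0)))) _ DI))).
  - intro t. unfold plus, scal; simpl; unfold mult; simpl.
    match goal with |- ?a = ?b => change (@eq R a b) end. unfold Rdiv. ring.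
  - assert (E : gamma_kernel v (X / r) * Rpower r (- p) = Rpower X (- p) * gamma_kernel (v + p) (X / r)).
    { unfold gamma_kernel. rewrite <- Rmult_assoc, <- Rpower_div_shift by auto. ring. }
    unfold plus, mult, scal; simpl; unfold mult; simpl.
    match goal with |- ?a = ?b => change (@eq R a b) end.
    replace (Rpower r (- p - 1)) with (Rpower r (- p) / r).
    2: { replace (- p - 1) with (- p + - (1)) by ring.
         rewrite Rpower_plus, (Rpower_Ropp r 1), Rpower_1 by lra. reflexivity. }
    set (gv := gamma_kernel v (X / r)) in *. set (rp := Rpower r (- p)) in *.
    replace (gv * X / ((A0 + B0) * (r * (r * 1))) * rp) with (X / ((A0 + B0) * (r * (r * 1))) * (gv * rp))
      by (unfold Rdiv; ring).
    rewrite E. field. lra.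
Qed.

Lemma upper_gamma_reg_moment (X p : R) : 0 < X -> 0 < p ->
  exists A B, int_split (fun r => upper_gamma_reg v A0 B0 (X / r) * Rpower r (- p - 1)) A B /\
    A + B = Rpower X (- p) * Gamma_fun (v + p) / (p * (A0 + B0)).
Proof.
  intros HX Hp. pose proof Gamma_split_pos as HG.
  destruct (gamma_kernel_int_split (v + p)) as [Ak [Bk Hk]]; [lra|].
  pose proof Hk as [_ [HAk HBk]]. destruct kernel_split as [_ [_ HB0]].
  set (c := Rpower X (- p) / (p * (A0 + B0))).
  set (Q := fun r => upper_gamma_reg v A0 B0 (X / r)).
  assert (HQ0 : filterlim (fun r => Q r * Rpower r (- p)) (at_right 0) (locally 0)).
  { apply (filterlim_ext_loc (fun r => Rpower X (- p) / (A0 + B0) *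
      (Rpower (X / r) p * (B0 - RInt (gamma_kernel v) 1 (X / r))))).
    - apply (at_right_0_intro _ 1); [lra|]. intros r Hr.
      pose proof (Rpower_div_shift X r 1 p HX ltac:(lra)) as E.
      replace (1 - 1) with 0 in E by ring. replace (1 + p - 1) with p in E by ring.
      rewrite Rpower_O, Rmult_1_l in E by (apply Rdiv_lt_0_compat; lra).
      unfold Q, upper_gamma_reg. rewrite E. field. lra.
    - pose proof (filterlim_comp _ _ _ _ _ _ _ _ (filterlim_div_at_right_0 X HX)
        (upper_tail_decay p Hp)) as H.
      apply (filterlim_Rmult_l (Rpower X (- p) / (A0 + B0))) in H. now rewrite Rmult_0_r in H. }
  assert (HQinf : filterlim (fun r => Q r * Rpower r (- p)) (Rbar_locally p_infty) (locally 0)).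
  { apply (filterlim_squeeze_0 _ (fun r => Rpower r (- p))).
    - exists 0. intros r Hr. pose proof (upper_gamma_reg_bounds (X / r) ltac:(apply Rdiv_lt_0_compat; lra)).
      pose proof (Rpower_pos r (- p)). unfold Q. split; nra.
    - now apply filterlim_Rpower_opp_pinfty. }
  assert (HI0 : filterlim (fun r => RInt (gamma_kernel (v + p)) 1 (X / r)) (at_right 0) (locally Bk))
    by exact (filterlim_comp _ _ _ _ _ _ _ _ (filterlim_div_at_right_0 X HX) HBk).
  assert (HIinf : filterlim (fun r => RInt (gamma_kernel (v + p)) 1 (X / r))
    (Rbar_locally p_infty) (locally (- Ak))).
  { apply (filterlim_ext_loc (fun r => - RInt (gamma_kernel (v + p)) (X / r) 1)).
    - exists 0. intros r Hr. symmetry.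
      apply RInt_swap_pos; [apply continuous_gamma_kernel|lra|apply Rdiv_lt_0_compat; lra].
    - replace (- Ak) with (-1 * Ak) by ring.
      apply (filterlim_ext (fun r => -1 * RInt (gamma_kernel (v + p)) (X / r) 1)); [intro; ring|].
      apply filterlim_Rmult_l.
      exact (filterlim_comp _ _ _ _ (fun w => RInt (gamma_kernel (v + p)) w 1) _ _ _
        (filterlim_div_pinfty X HX) HAk). }
  destruct (int_split_of_derive (fun r => Q r * Rpower r (- p - 1))
    (fun r => - / p * (Q r * Rpower r (- p)) + - c * RInt (gamma_kernel (v + p)) 1 (X / r))
    (- / p * 0 + - c * Bk) (- / p * 0 + - c * - Ak)) as [Hc [HA HB]].
  - intros r Hr. apply (continuous_mult Q (fun r => Rpower r (- p - 1))); [|now apply continuous_Rpower].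
    apply (@ex_derive_continuous R_AbsRing R_NormedModule). eexists. now apply is_derive_upper_gamma_reg_div.
  - intros r Hr.
    refine (is_derive_ext_val _ _ _ _ _ _ _ (is_derive_moment_primitive X p r HX Hp Hr));
      [|reflexivity].
    intro t. unfold Q, c, Rdiv. ring.
  - apply filterlim_Rplus; now apply filterlim_Rmult_l.
  - apply filterlim_Rplus; now apply filterlim_Rmult_l.
  - eexists _, _. split; [repeat split; eassumption|].
    rewrite (Gamma_fun_split _ _ _ Hk). unfold c. field. lra.
Qed.

End UpperGamma.

(** * Moments and the expansion of the mass at zero *)

(* Closed form of int_0^oo Q(v, X / r) r^(-k-3/2) dr when G = Gamma(v)
   (see upper_gamma_reg_moment). *)
Definition moment (v X G : R) (k : nat) : R :=
  Rpower X (- (INR k + 1 / 2)) * Gamma_fun (v + (INR k + 1 / 2)) / ((INR k + 1 / 2) * G).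

Lemma sum_f_R0_Rmult_l (c : R) (f : nat -> R) (n : nat) :
  sum_f_R0 (fun k => c * f k) n = c * sum_f_R0 f n.
Proof. induction n as [|n IH]; simpl; [|rewrite IH]; ring. Qed.

Section Moments.

Variables v A0 B0 X : R.
Hypothesis v_pos : 0 < v.
Hypothesis kernel_split : int_split (gamma_kernel v) A0 B0.
Hypothesis X_pos : 0 < X.

Let W (r : R) : R := upper_gamma_reg v A0 B0 (X / r) * Rpower r (- (3 / 2)).

Lemma W_nonneg (r : R) : 0 < r -> 0 <= W r.
Proof.
  intro Hr. apply Rmult_le_pos; [|left; apply Rpower_pos].
  apply (upper_gamma_reg_bounds v A0 B0 v_pos kernel_split). now apply Rdiv_lt_0_compat.
Qed.

Lemma moment_int_split (k : nat) :
  exists A B, int_split (fun r => W r * (/ r) ^ k) A B /\ A + B = moment v X (A0 + B0) k.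
Proof.
  assert (Hp : 0 < INR k + 1 / 2) by (pose proof (pos_INR k); lra).
  destruct (upper_gamma_reg_moment v A0 B0 v_pos kernel_split X _ X_pos Hp) as [A [B [H HS]]].
  exists A, B. split; [|exact HS].
  revert H. apply int_split_ext.
  intros r Hr. unfold W. replace (- (INR k + 1 / 2) - 1) with (- (3 / 2) + - INR k) by lra.
  rewrite Rpower_plus, (Rpower_Ropp r (INR k)), Rpower_pow, pow_inv by lra. ring.
Qed.

Lemma truncated_int_split (z : R) (n : nat) :
  exists A B, int_split (fun r => W r * sum_f_R0 (fun k => / INR (fact k) * (- (z / r)) ^ k) n) A B /\
    A + B = sum_f_R0 (fun k => (- z) ^ k / INR (fact k) * moment v X (A0 + B0) k) n.
Proof.
  destruct (int_split_sum (fun k r => W r * (/ r) ^ k) _ (fun k => (- z) ^ k / INR (fact k)) n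
    moment_int_split) as [A [B [H HS]]].
  exists A, B. split; [|exact HS]. revert H. apply int_split_ext.
  intros r Hr. rewrite <- sum_f_R0_Rmult_l. apply sum_eq. intros k _.
  replace (- (z / r)) with (- z * / r) by (field; lra). rewrite Rpow_mult_distr.
  pose proof (INR_fact_neq_0 k). field. auto.
Qed.

Lemma continuous_W (r : R) : 0 < r -> continuous W r.
Proof.
  intro Hr.
  apply (continuous_mult (fun r => upper_gamma_reg v A0 B0 (X / r)) (fun r => Rpower r (- (3 / 2))));
    [|now apply continuous_Rpower].
  apply (@ex_derive_continuous R_AbsRing R_NormedModule). eexists.
  now apply is_derive_upper_gamma_reg_div.
Qed.

Lemma exp_int_split (z : R) : 0 <= z -> exists A B, int_split (fun r => W r * exp (- (z / r))) A B.
Proof.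
  intros Hz. destruct (moment_int_split 0) as [A [B [H _]]].
  apply (int_split_of_le _ (fun r => W r * (/ r) ^ 0) A B); [| |exact H].
  - intros r Hr. apply (continuous_mult W (fun r => exp (- (z / r)))); [now apply continuous_W|].
    apply (@ex_derive_continuous R_AbsRing R_NormedModule). auto_derive. lra.
  - intros r Hr. pose proof (W_nonneg r Hr). pose proof (exp_pos (- (z / r))).
    pose proof (exp_opp_le_1 (z / r) ltac:(apply Rdiv_le_0_compat; lra)). simpl. nra.
Qed.

Lemma exp_int_split_taylor (z A B : R) (n : nat) : 0 <= z ->
  int_split (fun r => W r * exp (- (z / r))) A B ->
  Rabs (A + B - sum_f_R0 (fun k => (- z) ^ k / INR (fact k) * moment v X (A0 + B0) k) n)
    <= z ^ S n / INR (fact (S n)) * moment v X (A0 + B0) (S n).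
Proof.
  intros Hz H.
  destruct (truncated_int_split z n) as [At [Bt [Ht HSt]]].
  destruct (moment_int_split (S n)) as [Am [Bm [Hm HSm]]].
  set (K := z ^ S n / INR (fact (S n))).
  set (T := fun r => sum_f_R0 (fun k => / INR (fact k) * (- (z / r)) ^ k) n) in *.
  assert (Htaylor : forall r, 0 < r -> Rabs (W r * exp (- (z / r)) - W r * T r) <= K * (W r * (/ r) ^ S n)).
  { intros r Hr.
    rewrite <- Rmult_minus_distr_l, Rabs_mult, (Rabs_right (W r)) by (apply Rle_ge, W_nonneg, Hr).
    replace (K * (W r * (/ r) ^ S n)) with (W r * ((z / r) ^ S n / INR (fact (S n))))
      by (unfold K, Rdiv; rewrite Rpow_mult_distr; ring).
    apply Rmult_le_compat_l; [now apply W_nonneg|].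
    apply taylor_exp_opp, Rdiv_le_0_compat; lra. }
  assert (Hup : forall r, 0 < r -> W r * exp (- (z / r)) <= W r * T r + K * (W r * (/ r) ^ S n)).
  { intros r Hr. pose proof (Htaylor r Hr) as Hb. apply Rabs_le_between in Hb. lra. }
  assert (Hdn : forall r, 0 < r -> W r * T r + - K * (W r * (/ r) ^ S n) <= W r * exp (- (z / r))).
  { intros r Hr. pose proof (Htaylor r Hr) as Hb. apply Rabs_le_between in Hb. lra. }
  destruct (int_split_le _ _ _ _ _ _ Hup H (int_split_plus _ _ _ _ _ _ Ht (int_split_scal _ _ _ K Hm))).
  destruct (int_split_le _ _ _ _ _ _ Hdn (int_split_plus _ _ _ _ _ _ Ht (int_split_scal _ _ _ (- K) Hm)) H).
  rewrite <- HSt, <- HSm. apply Rabs_le. split; lra.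
Qed.

End Moments.

(** * Size of the terms *)

Definition gamma_series_term (q a : R) (k : nat) : R :=
  q ^ k * Gamma_fun (INR k + 1 + a) / (INR (fact k) * (INR k + 1 / 2)).

Lemma moment_series_term (v X G z : R) (k : nat) : 0 < X -> 0 < G ->
  z ^ k / INR (fact k) * moment v X G k = Rpower X (- (1 / 2)) / G * gamma_series_term (z / X) (v - 1 / 2) k.
Proof.
  intros HX HG. unfold moment, gamma_series_term.
  replace (INR k + 1 + (v - 1 / 2)) with (v + (INR k + 1 / 2)) by lra.
  replace (- (INR k + 1 / 2)) with (- (1 / 2) + - INR k) by lra.
  rewrite Rpower_plus, (Rpower_Ropp X (INR k)), Rpower_pow by exact HX.
  unfold Rdiv. rewrite Rpow_mult_distr, pow_inv.
  pose proof (INR_fact_neq_0 k). pose proof (pos_INR k). pose proof (pow_lt X k HX).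
  field. repeat split; lra.
Qed.

Lemma pow_ge_Bernoulli (q : R) (n : nat) : 1 <= q -> 1 + INR n * (q - 1) <= q ^ n.
Proof.
  intro Hq. induction n as [|n IH]; [simpl; lra|].
  rewrite S_INR. simpl. assert (1 <= q ^ n) by (apply pow_R1_Rle; lra). nra.
Qed.

Lemma gamma_series_term_pos (q a : R) (k : nat) : 0 < q -> 0 <= a -> 0 < gamma_series_term q a k.
Proof.
  intros Hq Ha. pose proof (pos_INR k). unfold gamma_series_term.
  apply Rdiv_lt_0_compat; [apply Rmult_lt_0_compat; [now apply pow_lt|apply Gamma_fun_pos; lra]|].
  apply Rmult_lt_0_compat; [apply lt_0_INR, lt_O_fact|lra].
Qed.

Lemma gamma_series_term_bounded_below (q a : R) : 0 <= a -> 1 < q \/ (q = 1 /\ 1 <= a) ->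
  exists kappa, 0 < kappa /\ forall k, (2 <= k)%nat -> kappa <= gamma_series_term q a k.
Proof.
  intros Ha Hcase.
  assert (Hk : forall k, (2 <= k)%nat -> 2 <= INR k /\ 2 <= INR (fact k)).
  { intros k Hk. split; [apply (le_INR 2 k Hk)|].
    destruct k as [|k]; [lia|]. rewrite fact_simpl, mult_INR.
    pose proof (le_INR 2 (S k) Hk). pose proof (le_INR 1 _ (lt_O_fact k)). simpl in *. nra. }
  destruct Hcase as [Hq | [-> Ha1]].
  - exists (Rmin 1 (q - 1) / 2). split; [apply Rdiv_lt_0_compat; [apply Rmin_pos|]; lra|].
    intros k H2k. destruct (Hk k H2k) as [HkR Hf]. unfold gamma_series_term.
    pose proof (fact_le_Gamma_fun k 0 a ltac:(simpl; lra)) as HG. rewrite Nat.add_0_r in HG.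
    pose proof (pow_ge_Bernoulli q k ltac:(lra)).
    assert (Hmin : Rmin 1 (q - 1) * (INR k + 1 / 2) <= q ^ k).
    { unfold Rmin. destruct Rle_dec; nra. }
    apply (Rmult_le_reg_r (INR (fact k) * (INR k + 1 / 2))); [nra|].
    match goal with |- _ <= ?N / ?D * ?D => replace (N / D * D) with N by (field; nra) end.
    pose proof (Rmin_pos 1 (q - 1) ltac:(lra) ltac:(lra)). pose proof (pow_lt q k ltac:(lra)). nra.
  - exists (1 / 2). split; [lra|].
    intros k H2k. destruct (Hk k H2k) as [HkR Hf]. unfold gamma_series_term. rewrite pow1.
    pose proof (fact_le_Gamma_fun k 1 a ltac:(simpl; lra)) as HG.
    replace (k + 1)%nat with (S k) in HG by lia. rewrite fact_simpl, mult_INR, S_INR in HG.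
    apply (Rmult_le_reg_r (INR (fact k) * (INR k + 1 / 2))); [nra|].
    match goal with |- _ <= ?N / ?D * ?D => replace (N / D * D) with N by (field; nra) end. nra.
Qed.

Lemma gamma_series_term_le (q a : R) : 0 < q -> 0 <= a ->
  exists C N, (1 <= N)%nat /\ forall n, (N <= n)%nat ->
    gamma_series_term q a (S n) <= C * (Rpower (INR n) (-1 + a) * q ^ n).
Proof.
  intros Hq Ha. destruct (INR_archimed 1 a) as [J HJ]; [lra|].
  exists ((1 + 2 ^ J) * Rpower 2 a * q), (Nat.max 1 J). split; [lia|]. intros n Hn.
  assert (Hn1 : 1 <= INR n) by (apply (le_INR 1); lia).
  pose proof (Gamma_fun_le_pow_fact (S n) J a ltac:(lia) ltac:(lia) ltac:(lra)) as HG.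
  assert (Hpow : Rpower (INR (S n)) a <= Rpower 2 a * Rpower (INR n) a).
  { rewrite Rpower_mult_distr by lra. apply Rle_Rpower_l; [lra|]. rewrite S_INR. lra. }
  replace (Rpower (INR n) (-1 + a)) with (Rpower (INR n) a / INR n)
    by (replace (-1 + a) with (a + - (1)) by ring;
        rewrite Rpower_plus, (Rpower_Ropp _ 1), Rpower_1 by lra; reflexivity).
  unfold gamma_series_term. rewrite S_INR in *. simpl pow.
  set (g := Gamma_fun (INR n + 1 + 1 + a)) in *. set (f := INR (fact (S n))) in *.
  assert (Hf : 0 < f) by apply lt_0_INR, lt_O_fact.
  pose proof (Rpower_pos (INR n) a). pose proof (Rpower_pos 2 a). pose proof (Rpower_pos (INR n + 1) a).
  pose proof (pow_lt q n Hq). pose proof (pow_lt 2 J ltac:(lra)).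
  apply Rle_trans with (q * q ^ n * (Rpower (INR n + 1) a * f * (1 + 2 ^ J)) / (f * (INR n + 1 + 1 / 2))).
  { apply Rmult_le_compat_r; [left; apply Rinv_0_lt_compat; nra|].
    apply Rmult_le_compat_l; [nra|exact HG]. }
  replace (q * q ^ n * (Rpower (INR n + 1) a * f * (1 + 2 ^ J)) / (f * (INR n + 1 + 1 / 2)))
    with ((1 + 2 ^ J) * q * q ^ n * (Rpower (INR n + 1) a / (INR n + 1 + 1 / 2))) by (field; lra).
  replace ((1 + 2 ^ J) * Rpower 2 a * q * (Rpower (INR n) a / INR n * q ^ n))
    with ((1 + 2 ^ J) * q * q ^ n * (Rpower 2 a * Rpower (INR n) a / INR n)) by (field; lra).
  apply Rmult_le_compat_l; [left; repeat apply Rmult_lt_0_compat; lra|].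
  apply Rle_trans with (Rpower (INR n + 1) a / INR n).
  - apply Rmult_le_compat_l; [lra|]. apply Rinv_le_contravar; lra.
  - apply Rmult_le_compat_r; [left; apply Rinv_0_lt_compat; lra|exact Hpow].
Qed.

Lemma not_Un_cv_of_large_steps (u : nat -> R) (kappa : R) : 0 < kappa ->
  (forall k, (2 <= k)%nat -> kappa <= Rabs (u k - u (pred k))) -> ~ exists l, Un_cv u l.
Proof.
  intros Hk Hstep [l Hl]. destruct (Hl (kappa / 2)) as [N HN]; [lra|].
  pose proof (HN (S (S N)) ltac:(lia)) as H1. pose proof (HN (S N) ltac:(lia)) as H2.
  pose proof (Hstep (S (S N)) ltac:(lia)) as H3. simpl pred in H3. unfold R_dist in H1, H2.
  assert (Rabs (u (S (S N)) - u (S N)) < kappa); [|lra].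
  replace (u (S (S N)) - u (S N)) with ((u (S (S N)) - l) - (u (S N) - l)) by ring.
  eapply Rle_lt_trans; [apply Rabs_triang|]. rewrite Rabs_Ropp. lra.
Qed.

Lemma exp_opp_mult_ln_inv (q : R) (n : nat) : 0 < q -> exp (- (INR n * ln (/ q))) = q ^ n.
Proof.
  intro Hq. rewrite ln_Rinv, <- Rpower_pow by exact Hq. unfold Rpower. f_equal. ring.
Qed.

(** * The SABR mass at zero *)

Section Sabr.

Variables x0 y0 nu beta : R.
Hypotheses (hy0 : 0 < y0) (hnu : 0 < nu) (hb0 : 0 <= beta) (hb1 : beta < 1).

(* In these coordinates tail_factor x0 beta r = Q(v, X / r), the integrand of P_inf is
   c0 Q(v, X / r) r^(-3/2) e^(-z/r), and q = z / X. *)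
Let v := / (2 * (1 - beta)).
Let X := Rpower x0 (2 * (1 - beta)) / (2 * (1 - beta) ^ 2).
Let z := y0 ^ 2 / (2 * nu ^ 2).
Let c0 := y0 / (nu * sqrt (2 * PI)).

Lemma sabr_index_pos : 0 < v.
Proof. apply Rinv_0_lt_compat. lra. Qed.

Lemma sabr_scale_pos : 0 < X.
Proof. apply Rdiv_lt_0_compat; [apply Rpower_pos|apply Rmult_lt_0_compat; [lra|apply pow_lt; lra]]. Qed.

Lemma sabr_rate_pos : 0 < z.
Proof. apply Rdiv_lt_0_compat; [apply pow_lt; lra|apply Rmult_lt_0_compat; [lra|apply pow_lt; lra]]. Qed.

Lemma sabr_prefactor_pos : 0 < c0.
Proof.
  apply Rdiv_lt_0_compat; [lra|]. apply Rmult_lt_0_compat; [lra|].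
  apply sqrt_lt_R0. pose proof PI_RGT_0. lra.
Qed.

Lemma q_param_eq_div : q_param x0 y0 nu beta = z / X.
Proof.
  unfold q_param, z, X. pose proof (Rpower_pos x0 (2 * (1 - beta))).
  field. repeat split; try lra; apply pow_nonzero; lra.
Qed.

Lemma q_param_pos : 0 < q_param x0 y0 nu beta.
Proof. rewrite q_param_eq_div. apply Rdiv_lt_0_compat; [apply sabr_rate_pos|apply sabr_scale_pos]. Qed.

Lemma beta_exponent_nonneg : 0 <= beta / (2 - 2 * beta).
Proof. apply Rdiv_le_0_compat; lra. Qed.

Lemma beta_exponent_ge_1 : 2 / 3 <= beta -> 1 <= beta / (2 - 2 * beta).
Proof.
  intro Hb. apply (Rmult_le_reg_r (2 - 2 * beta)); [lra|].
  unfold Rdiv. rewrite Rmult_assoc, Rinv_l; lra.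
Qed.

Section KernelSplit.

Variables A0 B0 : R.
Hypothesis kernel_split : int_split (gamma_kernel v) A0 B0.

Lemma tail_factor_upper_gamma_reg (r : R) : 0 < r ->
  tail_factor x0 beta r = upper_gamma_reg v A0 B0 (X / r).
Proof.
  intros Hr. pose proof (Gamma_split_pos v A0 B0 sabr_index_pos kernel_split).
  assert (Hw : Rpower x0 (2 * (1 - beta)) / (2 * r * (1 - beta) ^ 2) = X / r)
    by (unfold X; field; split; lra).
  unfold tail_factor, inc_Gamma. fold v. rewrite Hw.
  change (fun u => Rpower u (v - 1) * exp (- u)) with (gamma_kernel v).
  rewrite (Int_0_to_split _ _ _ _ kernel_split) by (apply Rdiv_lt_0_compat; [apply sabr_scale_pos|lra]).
  unfold Gamma_fun. change (fun u => Rpower u (v - 1) * exp (- u)) with (gamma_kernel v).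
  rewrite (Int_0_inf_split _ _ _ kernel_split). unfold upper_gamma_reg. field. lra.
Qed.

Lemma P_inf_n_moments (n : nat) :
  P_inf_n x0 y0 nu beta n = c0 * sum_f_R0 (fun k => (- z) ^ k / INR (fact k) * moment v X (A0 + B0) k) n.
Proof.
  destruct (truncated_int_split v A0 B0 X sabr_index_pos kernel_split sabr_scale_pos z n) as [A [B [H HS]]].
  unfold P_inf_n. rewrite (Int_0_inf_split _ (c0 * A) (c0 * B)); [rewrite <- HS; ring|].
  apply (int_split_scal _ _ _ c0) in H. revert H. apply int_split_ext.
  intros r Hr. rewrite tail_factor_upper_gamma_reg by exact Hr.
  replace (- (y0 ^ 2 / (2 * nu ^ 2 * r))) with (- (z / r)) by (unfold z; field; lra).
  rewrite Rpower_Ropp. unfold c0. pose proof (Rpower_pos r (3 / 2)).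
  pose proof (sqrt_lt_R0 (2 * PI) ltac:(pose proof PI_RGT_0; lra)). field. lra.
Qed.

Lemma P_inf_moments : exists I, P_inf x0 y0 nu beta = c0 * I /\
  forall n, Rabs (I - sum_f_R0 (fun k => (- z) ^ k / INR (fact k) * moment v X (A0 + B0) k) n)
    <= z ^ S n / INR (fact (S n)) * moment v X (A0 + B0) (S n).
Proof.
  assert (Hz : 0 <= z) by (left; apply sabr_rate_pos).
  destruct (exp_int_split v A0 B0 X sabr_index_pos kernel_split sabr_scale_pos z Hz) as [A [B H]].
  exists (A + B). split.
  2: { intro n. exact (exp_int_split_taylor v A0 B0 X sabr_index_pos kernel_split sabr_scale_pos
         z A B n Hz H). }
  unfold P_inf. fold c0. f_equal. apply Int_0_inf_split. revert H. apply int_split_ext.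
  intros r Hr. rewrite tail_factor_upper_gamma_reg by exact Hr.
  replace (y0 ^ 2 / (2 * nu ^ 2 * r)) with (z / r) by (unfold z; field; lra). ring.
Qed.

End KernelSplit.

Lemma P_inf_n_steps_and_remainder : exists K, 0 < K /\
  (forall n, Rabs (P_inf_n x0 y0 nu beta (S n) - P_inf_n x0 y0 nu beta n) =
     K * gamma_series_term (q_param x0 y0 nu beta) (beta / (2 - 2 * beta)) (S n)) /\
  (forall n, Rabs (P_inf x0 y0 nu beta - P_inf_n x0 y0 nu beta n) <=
     K * gamma_series_term (q_param x0 y0 nu beta) (beta / (2 - 2 * beta)) (S n)).
Proof.
  destruct (gamma_kernel_int_split v sabr_index_pos) as [A0 [B0 Hsplit]].
  pose proof (Gamma_split_pos v A0 B0 sabr_index_pos Hsplit) as HG.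
  pose proof sabr_scale_pos. pose proof sabr_prefactor_pos. pose proof sabr_rate_pos.
  assert (Hterm : forall k, z ^ k / INR (fact k) * moment v X (A0 + B0) k =
    Rpower X (- (1 / 2)) / (A0 + B0) * gamma_series_term (q_param x0 y0 nu beta) (beta / (2 - 2 * beta)) k).
  { intro k. rewrite moment_series_term, q_param_eq_div by lra.
    replace (v - 1 / 2) with (beta / (2 - 2 * beta)) by (unfold v; field; lra). reflexivity. }
  exists (c0 * (Rpower X (- (1 / 2)) / (A0 + B0))). split.
  { apply Rmult_lt_0_compat; [lra|]. apply Rdiv_lt_0_compat; [apply Rpower_pos|lra]. }
  split.
  - intro n. rewrite !(P_inf_n_moments A0 B0 Hsplit), tech5, <- Rmult_minus_distr_l.
    replace (_ + _ - _) with ((-1) ^ S n * (z ^ S n / INR (fact (S n)) * moment v X (A0 + B0) (S n)))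
      by (replace (- z) with (-1 * z) by ring; rewrite Rpow_mult_distr; unfold Rdiv; ring).
    rewrite Rabs_mult, Rabs_mult, pow_1_abs, Rmult_1_l, Hterm, (Rabs_right c0), Rabs_right; [ring|..].
    + apply Rle_ge, Rmult_le_pos; [apply Rdiv_le_0_compat; [left; apply Rpower_pos|lra]|].
      left. apply gamma_series_term_pos; [apply q_param_pos|apply beta_exponent_nonneg].
    + lra.
  - intro n. destruct (P_inf_moments A0 B0 Hsplit) as [I [HI Herr]].
    rewrite HI, (P_inf_n_moments A0 B0 Hsplit), <- Rmult_minus_distr_l, Rabs_mult, Rabs_right by lra.
    rewrite Rmult_assoc, <- Hterm. apply Rmult_le_compat_l; [lra|]. exact (Herr n).
Qed.

End Sabr.

Theorem theorem2p5 (x0 y0 nu beta : R)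
  (hx0 : 0 < x0) (hy0 : 0 < y0) (hnu : 0 < nu) (hb0 : 0 <= beta) (hb1 : beta < 1) :
  let q := q_param x0 y0 nu beta in
  ((1 < q \/ (q = 1 /\ 2 / 3 <= beta)) ->
     ~ (exists l : R, Un_cv (P_inf_n x0 y0 nu beta) l)) /\
  ((q < 1 \/ (q = 1 /\ beta < 2 / 3)) ->
     exists (C : R) (N : nat), (1 <= N)%nat /\
       forall n : nat, (N <= n)%nat ->
         Rabs (P_inf x0 y0 nu beta - P_inf_n x0 y0 nu beta n)
           <= C * (Rpower (INR n) (-1 + beta / (2 - 2 * beta))
                   * exp (- (INR n * ln (/ q))))).
Proof.
  (* The bound of (ii) holds for every q > 0; its hypothesis only makes it a convergence
     rate. Neither part needs x0 > 0, since Rpower x0 _ is positive for every x0. *)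
  intros q.
  destruct (P_inf_n_steps_and_remainder x0 y0 nu beta hy0 hnu hb0 hb1) as [K [HK [Hstep Herr]]].
  pose proof (q_param_pos x0 y0 nu beta hy0 hnu hb1) as Hq. fold q in Hstep, Herr, Hq.
  pose proof (beta_exponent_nonneg beta hb0 hb1) as Ha.
  split.
  - intros Hcase.
    destruct (gamma_series_term_bounded_below q (beta / (2 - 2 * beta)) Ha) as [kappa [Hkappa Hlow]].
    { destruct Hcase as [|[Hq1 Hb]]; [now left|right]. split; [exact Hq1|]. now apply beta_exponent_ge_1. }
    apply (not_Un_cv_of_large_steps _ (K * kappa)); [nra|].
    intros [|k] Hk; [lia|]. simpl pred. rewrite Hstep.
    apply Rmult_le_compat_l; [lra|]. now apply Hlow.
  - intros _.
    destruct (gamma_series_term_le q (beta / (2 - 2 * beta)) Hq Ha) as [C [N [HN Hbound]]].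
    exists (K * C), N. split; [exact HN|]. intros n Hn.
    rewrite exp_opp_mult_ln_inv by exact Hq.
    eapply Rle_trans; [apply Herr|]. rewrite Rmult_assoc.
    apply Rmult_le_compat_l; [lra|]. now apply Hbound.
Qed.
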